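(* Let $n\ge 4$ and $1\le k<\frac{n}{2}$ be integers, let $P_1=\{v\subset[n]:|v|=k\}$ and $P_2=\{w\subset [n]:|w|=k+1\}$, and let $f$ be an automorphism of $B(n,k)$. If $n\ne 2k+1$, then $f(P_1)=P_1$ and $f(P_2)=P_2$. If $n=2k+1$, then either $f(P_1)=P_1$ and $f(P_2)=P_2$, or $f(P_1)=P_2$ and $f(P_2)=P_1$.
   Context: For integers $n\ge 4$ and $1\le k<\frac n2$, let $[n]=\{1,\dots,n\}$. The graph $B(n,k)$ has vertex set $V=\{v\subset[n] : |v|\in\{k,k+1\}\}$, and two vertices $v,w$ are adjacent iff $v\subset w$ or $w\subset v$. *)

From mathcomp Require Import all_boot.
Set Implicit Arguments. Unset Strict Implicit. Unset Printing Implicit Defensive.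

Definition is_Bvertex (n k : nat) (v : {set 'I_n}) : bool :=
  (#|v| == k) || (#|v| == k.+1).

Definition Bvert (n k : nat) := {v : {set 'I_n} | is_Bvertex k v}.

Definition Badj (n k : nat) (v w : Bvert n k) : bool :=
  (v != w) && ((val v \subset val w) || (val w \subset val v)).

Definition is_Baut (n k : nat) (f : Bvert n k -> Bvert n k) : Prop :=
  bijective f /\ forall v w, Badj v w = Badj (f v) (f w).

Definition P1 (n k : nat) : {set Bvert n k} := [set v : Bvert n k | #|val v| == k].
Definition P2 (n k : nat) : {set Bvert n k} := [set v : Bvert n k | #|val v| == k.+1].

From mathcomp Require Import all_boot.
From mathcomp Require Import zify.
Set Implicit Arguments. Unset Strict Implicit.

(* Adjacent vertices of B(n,k) lie in different levels, so for an automorphism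
   f the boolean "f v is on the same level as v" is invariant along edges.
   B(n,k) is connected (two k-sets are joined through their unions with one
   missing element), hence f either preserves both levels or swaps them.
   A swap is a bijection between the levels, so C(n,k) = C(n,k+1), which
   forces n = 2k+1. *)

Lemma bin_succ_eq (n k : nat) : k <= n -> 'C(n, k.+1) = 'C(n, k) -> n = k.*2.+1.
Proof.
move=> le_kn eq_bin; have bin_pos : 0 < 'C(n, k) by rewrite bin_gt0.
have := mul_bin_left n k; rewrite eq_bin => /eqP; rewrite eqn_pmul2r //.
by move=> /eqP; lia.
Qed.

Lemma bij_imset_eq (T : finType) (f : T -> T) (A B : {set T}) :
  bijective f -> (forall x, (f x \in B) = (x \in A)) -> f @: A = B.
Proof.
move=> [g fK gK] fAB; apply/setP => y.
by rewrite -[y]gK mem_imset ?fAB //; exact: can_inj fK.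
Qed.

Section Levels.
Variables n k : nat.

Lemma card_Bvert (v : Bvert n k) : #|val v| = k \/ #|val v| = k.+1.
Proof. by case: v => A /= /orP [] /eqP ->; [left | right]. Qed.

Lemma in_P2 (v : Bvert n k) : (v \in P2 n k) = (v \notin P1 n k).
Proof. by rewrite !inE; case: (card_Bvert v) => ->; lia. Qed.

Lemma Badj_P1 (v w : Bvert n k) : Badj v w -> (v \in P1 n k) = (w \notin P1 n k).
Proof.
rewrite /Badj !inE => /andP [neq_vw sub_vw].
have neq_card : #|val v| != #|val w|.
  apply: contra neq_vw => /eqP eq_card; apply/eqP/val_inj/eqP.
  by case/orP: sub_vw => sub; [|rewrite eq_sym]; rewrite eqEcard sub eq_card leqnn.
by move: neq_card; case: (card_Bvert v) => ->; case: (card_Bvert w) => ->; lia.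
Qed.

Lemma Badj_proper (v w : Bvert n k) : val v \proper val w -> Badj v w.
Proof.
rewrite properEneq /Badj => /andP [neq sub]; rewrite sub orTb andbT.
by apply: contra neq => /eqP ->.
Qed.

Lemma card_level (m : nat) : (m == k) || (m == k.+1) ->
  #|[set v : Bvert n k | #|val v| == m]| = 'C(n, m).
Proof.
move=> m_level; rewrite -(card_imset _ val_inj).
have -> : [set val v | v in [set v : Bvert n k | #|val v| == m]]
          = [set A : {set 'I_n} | #|A| == m].
  apply/setP => A; rewrite inE; apply/imsetP/idP => [[v] | card_A].
    by rewrite inE => card_v ->.
  have A_vert : is_Bvertex k A by rewrite /is_Bvertex (eqP card_A).
  by exists (exist _ A A_vert); rewrite ?inE.
by rewrite card_draws card_ord.
Qed.

Section Connected.
Variables (T : Type) (h : Bvert n k -> T).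
Hypothesis h_adj : forall v w, Badj v w -> h v = h w.

Lemma Badj_const_exchange (a : Bvert n k) x y :
  #|val a| = k -> x \in val a -> y \notin val a ->
  exists c : Bvert n k, [/\ val c = y |: (val a :\ x), #|val c| = k & h a = h c].
Proof.
case: a => A A_vert /= card_A xA yA.
have card_C : #|y |: (A :\ x)| = k.
  by rewrite cardsU1 in_setD1 (negPf yA) andbF (cardsD1 x A) xA in card_A *; lia.
have card_W : #|y |: A| = k.+1 by rewrite cardsU1 yA card_A.
have C_vert : is_Bvertex k (y |: (A :\ x)) by rewrite /is_Bvertex card_C eqxx.
have W_vert : is_Bvertex k (y |: A) by rewrite /is_Bvertex card_W eqxx orbT.
exists (Sub _ C_vert); split=> //.
rewrite (h_adj (w := Sub _ W_vert)); last first.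
  by apply: Badj_proper; rewrite properEcard subsetUr card_A card_W /=.
symmetry; apply: h_adj; apply: Badj_proper.
by rewrite properEcard setUS ?subD1set // card_C card_W /=.
Qed.

Lemma Badj_const_P1 (m : nat) (a b : Bvert n k) :
  #|val a| = k -> #|val b| = k -> #|val a :\: val b| = m -> h a = h b.
Proof.
elim: m a b => [|m IHm] a b card_a card_b card_ab.
  have sub_ab : val a \subset val b by rewrite -setD_eq0 -cards_eq0 card_ab.
  suff /val_inj -> : val a = val b by [].
  by apply/eqP; rewrite eqEcard sub_ab card_a card_b /=.
have card_ba : #|val b :\: val a| = m.+1.
  by move: (cardsID (val a) (val b)) (cardsID (val b) (val a)); rewrite setIC; lia.
have [x] : exists x, x \in val a :\: val b by apply/set0Pn; rewrite -card_gt0 card_ab.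
have [y] : exists y, y \in val b :\: val a by apply/set0Pn; rewrite -card_gt0 card_ba.
rewrite !inE => /andP [ya yb] /andP [xb xa].
have [c [val_c card_c ->]] := Badj_const_exchange card_a xa ya.
apply: IHm => //; rewrite val_c.
have -> : (y |: (val a :\ x)) :\: val b = (val a :\: val b) :\ x.
  apply/setP => z; rewrite !inE; case: (z =P y) => [-> | _] /=.
    by rewrite yb andbF.
  by rewrite andbCA.
by move: card_ab; rewrite (cardsD1 x) !inE xb xa; lia.
Qed.

Lemma Badj_const_P2 (w : Bvert n k) :
  #|val w| = k.+1 -> exists a : Bvert n k, #|val a| = k /\ h w = h a.
Proof.
case: w => W W_vert /= card_W.
have [x xW] : exists x, x \in W by apply/set0Pn; rewrite -card_gt0 card_W.
have card_A : #|W :\ x| = k by move: card_W; rewrite (cardsD1 x W) xW; lia.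
have A_vert : is_Bvertex k (W :\ x) by rewrite /is_Bvertex card_A eqxx.
exists (Sub _ A_vert); split=> //; symmetry; apply: h_adj; apply: Badj_proper.
by rewrite properEcard subD1set card_A card_W /=.
Qed.

Lemma Badj_const (v w : Bvert n k) : h v = h w.
Proof.
have to_P1 (u : Bvert n k) : exists a : Bvert n k, #|val a| = k /\ h u = h a.
  by case: (card_Bvert u) => [card_u | /Badj_const_P2]; first by exists u.
have [a [card_a ->]] := to_P1 v; have [b [card_b ->]] := to_P1 w.
exact: Badj_const_P1 card_a card_b erefl.
Qed.

End Connected.

Lemma Baut_P1 (f : Bvert n k -> Bvert n k) : is_Baut f ->
  (forall v, (f v \in P1 n k) = (v \in P1 n k)) \/
  (forall v, (f v \in P1 n k) = (v \notin P1 n k)).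
Proof.
move=> [_ f_adj]; pose same_level v := (f v \in P1 n k) == (v \in P1 n k).
have same_level_const : forall v w, same_level v = same_level w.
  apply: Badj_const => v w adj_vw; have adj_f : Badj (f v) (f w) by rewrite -f_adj.
  by rewrite /same_level (Badj_P1 adj_vw) (Badj_P1 adj_f); do 2!case: (_ \in _).
have [all_same | /forallPn [v0 not_same]] := boolP [forall v, same_level v].
  by left=> v; apply/eqP/(forallP all_same).
right=> v; move: not_same; rewrite (same_level_const v0 v) /same_level.
by do 2!case: (_ \in _).
Qed.

End Levels.

Theorem corollary3p9 (n k : nat) (f : Bvert n k -> Bvert n k) :
  4 <= n -> 1 <= k -> k.*2 < n -> is_Baut f ->
  (n != k.*2.+1 -> f @: P1 n k = P1 n k /\ f @: P2 n k = P2 n k) /\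
  (n = k.*2.+1 ->
     (f @: P1 n k = P1 n k /\ f @: P2 n k = P2 n k) \/
     (f @: P1 n k = P2 n k /\ f @: P2 n k = P1 n k)).
Proof.
move=> _ _ lt_2k_n f_aut; have f_bij := f_aut.1.
have [keep | swap] := Baut_P1 f_aut.
  suff f_levels : f @: P1 n k = P1 n k /\ f @: P2 n k = P2 n k by split=> _; [| left].
  by split; apply: bij_imset_eq => // v; rewrite ?in_P2 keep.
have f_swap : f @: P1 n k = P2 n k /\ f @: P2 n k = P1 n k.
  by split; apply: bij_imset_eq => // v; rewrite ?in_P2 swap ?negbK.
split=> [neq_n | _]; last by right.
have := card_imset (P1 n k) (bij_inj f_bij).
rewrite f_swap.1 card_level ?eqxx ?orbT // card_level ?eqxx // => eq_bin.
case/negP: neq_n; apply/eqP; apply: bin_succ_eq eq_bin; lia.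
Qed.
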